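(* Let $a$, $b$, $c$ be pairwise coprime positive integers with $a+b+c$ even. Then for all integers $p,q\geq1$ and all $x,y,z\in\mathbb{R}$, \begin{align*} a^{1-p}b^{1-q}S_{p,q}(a,b,c:x,y,z) &=\sum_{j=1}^{p}\binom{p-1}{j-1}a^{1-j}c^{1+j-p-q}S_{p+q-j,j}(c,-a,b:z,x,y)\\ &\quad+\sum_{h=1}^{q}\binom{q-1}{h-1}(-1)^{h}b^{1-h}c^{1+h-p-q}S_{p+q-h,h}(c,b,a:z,-y,x). \end{align*}
   Context: $E_n(x)$ denotes the $n$th Euler polynomial, defined by $\frac{2e^{xt}}{e^t+1}=\sum_{n\ge0}E_n(x)\frac{t^n}{n!}$. The $n$th Euler function $\mathcal{E}_n$ ($n\ge0$) is defined by $\mathcal{E}_n(x)=E_n(x)$ for $0\le x<1$ and $\mathcal{E}_n(x+m)=(-1)^m\mathcal{E}_n(x)$ for $m\in\mathbb{Z}$. For integers $a,b$, a positive integer $c$, integers $p,q\ge1$ and real $x,y,z$, define $$S_{p,q}(a,b,c:x,y,z)=\sum_{\mu=0}^{c-1}(-1)^{\mu}\mathcal{E}_{p-1}\Big(a\frac{\mu+z}{c}+x\Big)\mathcal{E}_{q-1}\Big(b\frac{\mu+z}{c}+y\Big).$$ *)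

From Stdlib Require Import Reals ZArith.
From Coquelicot Require Import Coquelicot.
Open Scope R_scope.

Definition euler_poly (n : nat) (x : R) : R :=
  Derive_n (fun t => 2 * exp (x * t) / (exp t + 1)) n 0.

Definition sgnZ (m : Z) : R := if Z.even m then 1 else -1.

(* n-th Euler function: E_n on [0,1), extended by E(x+m) = (-1)^m E(x).
   Int_part x is the floor of x. *)
Definition euler_fun (n : nat) (x : R) : R :=
  sgnZ (Int_part x) * euler_poly n (x - IZR (Int_part x)).

Definition S_pq (p q : nat) (a b c : Z) (x y z : R) : R :=
  sum_f_R0 (fun mu : nat =>
      (-1) ^ mu
      * euler_fun (p - 1) (IZR a * ((INR mu + z) / IZR c) + x)
      * euler_fun (q - 1) (IZR b * ((INR mu + z) / IZR c) + y))
    (Z.to_nat c - 1).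

(* Write F(u, s) := 2 (-1)^⌊u⌋ e^({u} s) / (e^s + 1), so that the n-th derivative of F(u, .)
   at 0 is 𝓔_n(u). For α = s/a, β = t/b, γ = (s + t)/c, or any α, β, γ with aα + bβ = cγ,

     Σ_{μ<c} (-1)^μ F(a(μ+z)/c + x, α) F(b(μ+z)/c + y, β)
       = Σ_{μ<b} (-1)^μ F(c(μ+y)/b + z, γ) F(-a(μ+y)/b + x, α)
         - Σ_{μ<a} (-1)^μ F(c(μ+x)/a + z, γ) F(b(μ+x)/a - y, -β),

   and differentiating p - 1 times in s and q - 1 times in t at 0 (Leibniz's rule on the right)
   gives the theorem. Since F(u, s) (e^s + 1) = 2 e^(us) (-1)^⌊u⌋ e^(-⌊u⌋ s), each term above is,
   up to a common factor, a jump of the step function t ↦ g(⌊at + x⌋, ⌊bt + y⌋, ⌊ct - z⌋) with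
   g(n1, n2, n3) = (-1)^(n1 + n2 + n3 + 1) e^(-n1 α - n2 β + (n3 + 1) γ), at a point where one of
   the three forms crosses an integer. Because a + b + c is even and aα + bβ = cγ, g is periodic
   with periods (a, b, c), so the step function has period 1 and its jumps over [0, 1] cancel. *)

From Stdlib Require Import Reals ZArith Lia Lra.
From Coquelicot Require Import Coquelicot.
Open Scope R_scope.

(** * Finite sums and binomial coefficients *)

Fixpoint sum_lt (f : nat -> R) (n : nat) : R :=
  match n with O => 0 | S n => sum_lt f n + f n end.

Lemma sum_lt_S f n : sum_lt f (S n) = sum_lt f n + f n.
Proof. reflexivity. Qed.

Lemma sum_lt_ext f g n : (forall i, (i < n)%nat -> f i = g i) -> sum_lt f n = sum_lt g n.
Proof. induction n as [|n IH]; simpl; intros H; auto. rewrite IH, H; auto. Qed.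

Lemma sum_lt_add f g n : sum_lt (fun i => f i + g i) n = sum_lt f n + sum_lt g n.
Proof. induction n as [|n IH]; simpl; [ring|]. rewrite IH; ring. Qed.

Lemma sum_lt_sub f g n : sum_lt (fun i => f i - g i) n = sum_lt f n - sum_lt g n.
Proof. induction n as [|n IH]; simpl; [ring|]. rewrite IH; ring. Qed.

Lemma sum_lt_opp f n : sum_lt (fun i => - f i) n = - sum_lt f n.
Proof. induction n as [|n IH]; simpl; [ring|]. rewrite IH; ring. Qed.

Lemma sum_lt_scal_l k f n : sum_lt (fun i => k * f i) n = k * sum_lt f n.
Proof. induction n as [|n IH]; simpl; [ring|]. rewrite IH; ring. Qed.

Lemma sum_lt_scal_r k f n : sum_lt (fun i => f i * k) n = sum_lt f n * k.
Proof. induction n as [|n IH]; simpl; [ring|]. rewrite IH; ring. Qed.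

Lemma sum_lt_S_l f n : sum_lt f (S n) = f 0%nat + sum_lt (fun i => f (S i)) n.
Proof. induction n as [|n IH]; [simpl; ring|]. rewrite sum_lt_S, IH; simpl; ring. Qed.

Lemma sum_lt_const0 n : sum_lt (fun _ => 0) n = 0.
Proof. induction n as [|n IH]; simpl; [|rewrite IH]; ring. Qed.

Lemma sum_lt_swap (f : nat -> nat -> R) n m :
  sum_lt (fun i => sum_lt (fun j => f i j) m) n = sum_lt (fun j => sum_lt (fun i => f i j) n) m.
Proof.
  induction n as [|n IH]; simpl.
  - symmetry; apply sum_lt_const0.
  - rewrite IH, <- sum_lt_add; reflexivity.
Qed.

Lemma sum_lt_rev f n : sum_lt f n = sum_lt (fun i => f (n - 1 - i)%nat) n.
Proof.
  induction n as [|n IH]; [reflexivity|].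
  rewrite sum_lt_S, IH, (sum_lt_S_l (fun i => f (S n - 1 - i)%nat)), Rplus_comm.
  replace (S n - 1 - 0)%nat with n by lia. f_equal.
  apply sum_lt_ext; intros; f_equal; lia.
Qed.

Lemma sum_f_R0_sum_lt f n : sum_f_R0 f n = sum_lt f (S n).
Proof. induction n as [|n IH]; simpl; [ring|]. rewrite IH; reflexivity. Qed.

Lemma sum_f_1_rev g n : sum_f 1 (S n) g = sum_lt (fun k => g (S (n - k))) (S n).
Proof.
  unfold sum_f. replace (S n - 1)%nat with n by lia.
  rewrite sum_f_R0_sum_lt, sum_lt_rev.
  apply sum_lt_ext; intros; f_equal; lia.
Qed.

(* Pascal's recursion, which (unlike [Binomial.C]) vanishes for [k > n]. *)
Fixpoint binom (n k : nat) : R :=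
  match n, k with
  | O, O => 1
  | O, S _ => 0
  | S _, O => 1
  | S n', S k' => binom n' k' + binom n' (S k')
  end.

Lemma binom_gt n k : (n < k)%nat -> binom n k = 0.
Proof.
  revert k; induction n as [|n IH]; intros [|k] H; simpl; try lia; auto.
  rewrite !IH by lia. ring.
Qed.

Lemma binom_0_r n : binom n 0 = 1.
Proof. destruct n; reflexivity. Qed.

Lemma binom_C n k : (k <= n)%nat -> binom n k = Binomial.C n k.
Proof.
  revert k; induction n as [|n IH]; intros k H.
  - destruct k; [|lia]. unfold Binomial.C; simpl. field.
  - destruct k as [|k].
    + rewrite binom_0_r. unfold Binomial.C. rewrite Nat.sub_0_r.
      simpl (INR (Factorial.fact 0)). field. apply INR_fact_neq_0.
    + simpl binom. destruct (Nat.eq_dec k n) as [->|Hkn].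
      * rewrite (binom_gt n (S n)), IH by lia. unfold Binomial.C. rewrite !Nat.sub_diag.
        field. repeat split; apply INR_fact_neq_0.
      * rewrite !IH by lia. apply Binomial.pascal. lia.
Qed.

(** * Successive derivatives *)

Definition is_derive_seq (f : R -> R) (F : nat -> R -> R) :=
  (forall x, F 0%nat x = f x) /\ forall n x, is_derive (F n) x (F (S n) x).

Lemma is_derive_seq_Derive_n f F : is_derive_seq f F -> forall n x, Derive_n f n x = F n x.
Proof.
  intros [H0 H1] n. induction n as [|n IH]; intros x; simpl.
  - now rewrite H0.
  - rewrite (Derive_ext _ (F n) x IH). apply is_derive_unique, H1.
Qed.

Lemma is_derive_seq_ext f g F : (forall x, f x = g x) -> is_derive_seq f F -> is_derive_seq g F.
Proof. intros E [H0 H1]; split; auto. intros; rewrite H0; auto. Qed.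

Lemma is_derive_seq_shift f F m : is_derive_seq f F -> is_derive_seq (F m) (fun n => F (m + n)%nat).
Proof.
  intros [H0 H1]; split; [intros; rewrite Nat.add_0_r; auto|].
  intros n x. rewrite <- Nat.add_succ_comm. auto.
Qed.

Lemma is_derive_seq_zero : is_derive_seq (fun _ => 0) (fun _ _ => 0).
Proof. split; [auto|]. intros _ x; apply (is_derive_const 0 x). Qed.

Lemma is_derive_seq_scal k f F :
  is_derive_seq f F -> is_derive_seq (fun x => k * f x) (fun n x => k * F n x).
Proof. intros [H0 H1]; split; [intros; rewrite H0; auto|]. intros; apply is_derive_scal; auto. Qed.

Lemma is_derive_seq_plus f g F G : is_derive_seq f F -> is_derive_seq g G ->
  is_derive_seq (fun x => f x + g x) (fun n x => F n x + G n x).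
Proof.
  intros [F0 F1] [G0 G1]; split; [intros; rewrite F0, G0; auto|].
  intros n x; apply (is_derive_plus (F n) (G n)); auto.
Qed.

Lemma is_derive_seq_minus f g F G : is_derive_seq f F -> is_derive_seq g G ->
  is_derive_seq (fun x => f x - g x) (fun n x => F n x - G n x).
Proof.
  intros [F0 F1] [G0 G1]; split; [intros; rewrite F0, G0; auto|].
  intros n x; apply (is_derive_minus (F n) (G n)); auto.
Qed.

Lemma is_derive_seq_sum (f : nat -> R -> R) F N :
  (forall i, is_derive_seq (f i) (F i)) ->
  is_derive_seq (fun x => sum_lt (fun i => f i x) N) (fun n x => sum_lt (fun i => F i n x) N).
Proof.
  intros H. induction N as [|N IH]; simpl.
  - apply is_derive_seq_zero.
  - apply is_derive_seq_plus; auto.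
Qed.

Lemma is_derive_seq_comp_affine f F a b : is_derive_seq f F ->
  is_derive_seq (fun x => f (a * x + b)) (fun n x => a ^ n * F n (a * x + b)).
Proof.
  intros [H0 H1]; split; [intros; simpl; rewrite H0; ring|].
  intros n x. apply is_derive_ext with (fun x => a ^ n * F n (a * x + b)); [auto|].
  replace (a ^ S n * F (S n) (a * x + b)) with (a ^ n * (a * F (S n) (a * x + b))) by (simpl; ring).
  apply is_derive_scal, (is_derive_comp (F n) (fun x => a * x + b)); [apply H1|].
  auto_derive; auto; ring.
Qed.

Lemma is_derive_seq_exp a : is_derive_seq (fun x => exp (a * x)) (fun n x => a ^ n * exp (a * x)).
Proof.
  split; [intros; simpl; ring|].
  intros n x. replace (a ^ S n * exp (a * x)) with (a ^ n * (a * exp (a * x))) by (simpl; ring).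
  apply is_derive_scal. auto_derive; auto. ring.
Qed.

Definition leibniz (F G : nat -> R -> R) n x :=
  sum_lt (fun k => binom n k * F k x * G (n - k)%nat x) (S n).

Lemma leibniz_S F G n x :
  leibniz F G (S n) x
  = sum_lt (fun k => binom n k * (F (S k) x * G (n - k)%nat x + F k x * G (S (n - k)) x)) (S n).
Proof.
  set (up := fun k => binom n k * F (S k) x * G (n - k)%nat x).
  set (shifted := fun k => binom n (S k) * F (S k) x * G (n - k)%nat x).
  assert (Hl : leibniz F G (S n) x = F 0%nat x * G (S n) x + (sum_lt up (S n) + sum_lt shifted (S n))).
  { unfold leibniz. rewrite sum_lt_S_l, <- sum_lt_add. simpl (binom (S n) 0). rewrite Nat.sub_0_r.
    rewrite Rmult_1_l. f_equal. apply sum_lt_ext; intros.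
    unfold up, shifted; simpl; ring. }
  assert (Hr : sum_lt (fun k => binom n k * F k x * G (S (n - k)) x) (S n)
               = F 0%nat x * G (S n) x + sum_lt shifted (S n)).
  { rewrite sum_lt_S_l, binom_0_r, Nat.sub_0_r. unfold shifted.
    rewrite sum_lt_S, (binom_gt n (S n)) by lia. f_equal; [ring|].
    rewrite Rmult_0_l, Rmult_0_l, Rplus_0_r. apply sum_lt_ext; intros.
    do 2 f_equal. lia. }
  rewrite Hl, (sum_lt_ext (fun k => binom n k * (F (S k) x * G (n - k)%nat x + F k x * G (S (n - k)) x))
                          (fun k => up k + binom n k * F k x * G (S (n - k)) x))
    by (intros; unfold up; ring).
  rewrite sum_lt_add, Hr. ring.
Qed.

Lemma is_derive_seq_mult f g F G : is_derive_seq f F -> is_derive_seq g G ->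
  is_derive_seq (fun x => f x * g x) (leibniz F G).
Proof.
  intros [F0 F1] [G0 G1]; split.
  - intros x; unfold leibniz; simpl. rewrite F0, G0. ring.
  - intros n x. rewrite leibniz_S. unfold leibniz.
    apply is_derive_ext with (fun y => sum_lt (fun k => binom n k * (F k y * G (n - k)%nat y)) (S n)).
    { intros; apply sum_lt_ext; intros; ring. }
    induction (S n) as [|N IH]; simpl; [apply (is_derive_const 0 x)|].
    apply (is_derive_plus _ (fun y => binom n N * (F N y * G (n - N)%nat y))); [exact IH|].
    apply is_derive_scal, Derive.is_derive_mult; auto.
Qed.

(** * The generating function of the Euler functions *)

Definition inv_exp1 (s : R) : R := / (exp s + 1).

(* Since [inv_exp1' = inv_exp1^2 - inv_exp1], the n-th derivative of [inv_exp1] is a polynomial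
   in [inv_exp1] of degree [n + 1]; these are its coefficients. *)
Fixpoint inv_exp1_coef (n k : nat) : R :=
  match n, k with
  | O, 1%nat => 1
  | O, _ => 0
  | S _, O => 0
  | S n', S k' => INR k' * inv_exp1_coef n' k' - INR (S k') * inv_exp1_coef n' (S k')
  end.

Definition inv_exp1_deriv n s := sum_lt (fun k => inv_exp1_coef n k * inv_exp1 s ^ k) (S (S n)).

Lemma inv_exp1_coef_gt n k : (S n < k)%nat -> inv_exp1_coef n k = 0.
Proof.
  revert k; induction n as [|n IH]; intros k H.
  - destruct k as [|[|k]]; simpl; auto; lia.
  - destruct k as [|k]; [lia|]. simpl. rewrite !IH by lia. ring.
Qed.

Lemma is_derive_inv_exp1_pow s k :
  is_derive (fun y => inv_exp1 y ^ k) s (INR k * (inv_exp1 s ^ S k - inv_exp1 s ^ k)).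
Proof.
  unfold inv_exp1. assert (Hp : exp s + 1 <> 0) by (generalize (exp_pos s); lra).
  auto_derive; [exact Hp|].
  destruct k as [|k]; simpl; [ring|]. field. exact Hp.
Qed.

Lemma is_derive_seq_inv_exp1 : is_derive_seq inv_exp1 inv_exp1_deriv.
Proof.
  split; [intros; unfold inv_exp1_deriv; simpl; ring|].
  intros n x. set (h := inv_exp1 x).
  replace (inv_exp1_deriv (S n) x)
    with (sum_lt (fun k => inv_exp1_coef n k * (INR k * (h ^ S k - h ^ k))) (S (S n))).
  - unfold inv_exp1_deriv. induction (S (S n)) as [|N IH]; simpl; [apply (is_derive_const 0 x)|].
    apply (is_derive_plus _ (fun y => inv_exp1_coef n N * inv_exp1 y ^ N)); [exact IH|].
    apply is_derive_scal, is_derive_inv_exp1_pow.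
  - set (D := fun k => INR k * inv_exp1_coef n k * h ^ k).
    assert (HD : sum_lt (fun k => D (S k)) (S (S n)) = sum_lt D (S (S n))).
    { assert (D0 : D 0%nat = 0) by (unfold D; simpl; ring).
      assert (Dtop : D (S (S n)) = 0) by (unfold D; rewrite inv_exp1_coef_gt by lia; ring).
      rewrite (sum_lt_S_l D), sum_lt_S, D0, Dtop. ring. }
    unfold inv_exp1_deriv. fold h. rewrite (sum_lt_S_l (fun k => inv_exp1_coef (S n) k * h ^ k)).
    rewrite (sum_lt_ext (fun i => inv_exp1_coef (S n) (S i) * h ^ S i)
                        (fun k => INR k * inv_exp1_coef n k * h ^ S k - D (S k)))
      by (intros; unfold D; simpl; ring).
    rewrite sum_lt_sub, HD, <- sum_lt_sub. simpl (inv_exp1_coef (S n) 0).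
    rewrite Rmult_0_l, Rplus_0_l. apply sum_lt_ext; intros; unfold D; ring.
Qed.

Definition euler_gf (u s : R) : R := 2 * sgnZ (Int_part u) * (exp (frac_part u * s) * inv_exp1 s).

Definition euler_gf_deriv (u : R) (n : nat) (s : R) : R :=
  2 * sgnZ (Int_part u)
  * leibniz (fun n s => frac_part u ^ n * exp (frac_part u * s)) inv_exp1_deriv n s.

Lemma is_derive_seq_euler_gf u : is_derive_seq (euler_gf u) (euler_gf_deriv u).
Proof.
  apply is_derive_seq_scal, is_derive_seq_mult;
    [apply is_derive_seq_exp | apply is_derive_seq_inv_exp1].
Qed.

Lemma euler_gf_deriv_0 u n : euler_gf_deriv u n 0 = euler_fun n u.
Proof.
  rewrite <- (is_derive_seq_Derive_n _ _ (is_derive_seq_euler_gf u)).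
  unfold euler_fun, euler_poly. rewrite <- Derive_n_scal_l.
  apply Derive_n_ext; intros t.
  unfold euler_gf, inv_exp1, frac_part. field. generalize (exp_pos t); lra.
Qed.

Lemma is_derive_seq_euler_gf_affine u k b :
  is_derive_seq (fun s => euler_gf u (k * s + b)) (fun n s => k ^ n * euler_gf_deriv u n (k * s + b)).
Proof. apply is_derive_seq_comp_affine, is_derive_seq_euler_gf. Qed.

Lemma is_derive_seq_euler_gf_deriv_affine u m k b :
  is_derive_seq (fun s => euler_gf_deriv u m (k * s + b))
                (fun n s => k ^ n * euler_gf_deriv u (m + n) (k * s + b)).
Proof.
  apply (is_derive_seq_comp_affine (euler_gf_deriv u m) (fun n => euler_gf_deriv u (m + n))).
  apply (is_derive_seq_shift (euler_gf u)), is_derive_seq_euler_gf.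
Qed.

(* [v] is the derivative [d^P/ds^P d^Q/dt^Q H(s, t)] at [(0, 0)], witnessed by the families of all
   inner derivatives [Fi s] and all outer derivatives [Fo]. *)
Definition has_mixed_derive (P Q : nat) (H : R -> R -> R) (v : R) :=
  exists (Fi : R -> nat -> R -> R) (Fo : nat -> R -> R),
    (forall s, is_derive_seq (H s) (Fi s)) /\ is_derive_seq (fun s => Fi s Q 0) Fo /\ Fo P 0 = v.

Lemma has_mixed_derive_unique P Q H1 H2 v1 v2 :
  has_mixed_derive P Q H1 v1 -> has_mixed_derive P Q H2 v2 ->
  (forall s t, H1 s t = H2 s t) -> v1 = v2.
Proof.
  intros (Fi & Fo & Hi & Ho & <-) (Gi & Go & Gi' & Go' & <-) E.
  rewrite <- (is_derive_seq_Derive_n _ _ Ho), <- (is_derive_seq_Derive_n _ _ Go').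
  apply Derive_n_ext; intros s.
  rewrite <- (is_derive_seq_Derive_n _ _ (Hi s)), <- (is_derive_seq_Derive_n _ _ (Gi' s)).
  apply Derive_n_ext; intros t. apply E.
Qed.

Lemma has_mixed_derive_minus P Q H1 H2 v1 v2 :
  has_mixed_derive P Q H1 v1 -> has_mixed_derive P Q H2 v2 ->
  has_mixed_derive P Q (fun s t => H1 s t - H2 s t) (v1 - v2).
Proof.
  intros (Fi & Fo & Hi & Ho & <-) (Gi & Go & Gi' & Go' & <-).
  exists (fun s n t => Fi s n t - Gi s n t), (fun n s => Fo n s - Go n s).
  split; [|split; [|reflexivity]]; [intros s|]; apply is_derive_seq_minus; auto.
Qed.

Section MixedDerivatives.
Variables (N : nat) (w : nat -> R) (P Q : nat).

Lemma has_mixed_derive_gf_prod (A B : nat -> R) ka kb :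
  has_mixed_derive P Q
    (fun s t => sum_lt (fun mu => w mu * euler_gf (A mu) (ka * s) * euler_gf (B mu) (kb * t)) N)
    (sum_lt (fun mu => w mu * (ka ^ P * euler_fun P (A mu)) * (kb ^ Q * euler_fun Q (B mu))) N).
Proof.
  exists (fun s n t => sum_lt (fun mu =>
            w mu * euler_gf (A mu) (ka * s) * (kb ^ n * euler_gf_deriv (B mu) n (kb * t + 0))) N).
  exists (fun n s => sum_lt (fun mu =>
            w mu * (kb ^ Q * euler_gf_deriv (B mu) Q (kb * 0 + 0))
            * (ka ^ n * euler_gf_deriv (A mu) n (ka * s + 0))) N).
  split; [|split].
  - intros s. apply (is_derive_seq_ext (fun t => sum_lt (fun mu =>
                       w mu * euler_gf (A mu) (ka * s) * euler_gf (B mu) (kb * t + 0)) N)).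
    { intros t. apply sum_lt_ext; intros. rewrite !Rplus_0_r. ring. }
    apply is_derive_seq_sum; intros mu.
    apply is_derive_seq_scal, is_derive_seq_euler_gf_affine.
  - apply (is_derive_seq_ext (fun s => sum_lt (fun mu =>
             w mu * (kb ^ Q * euler_gf_deriv (B mu) Q (kb * 0 + 0)) * euler_gf (A mu) (ka * s + 0)) N)).
    { intros s. apply sum_lt_ext; intros. rewrite !Rplus_0_r. ring. }
    apply is_derive_seq_sum; intros mu.
    apply is_derive_seq_scal, is_derive_seq_euler_gf_affine.
  - apply sum_lt_ext; intros.
    rewrite !Rmult_0_r, !Rplus_0_r, !euler_gf_deriv_0. ring.
Qed.

Lemma has_mixed_derive_gf_diag_l (A C : nat -> R) ka kc :
  has_mixed_derive P Q
    (fun s t => sum_lt (fun mu => w mu * euler_gf (C mu) (kc * (s + t)) * euler_gf (A mu) (ka * s)) N)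
    (sum_lt (fun mu => w mu * sum_lt (fun k =>
       binom P k * (kc ^ (Q + k) * euler_fun (Q + k) (C mu))
                 * (ka ^ (P - k) * euler_fun (P - k) (A mu))) (S P)) N).
Proof.
  exists (fun s n t => sum_lt (fun mu =>
            w mu * euler_gf (A mu) (ka * s) * (kc ^ n * euler_gf_deriv (C mu) n (kc * t + kc * s))) N).
  exists (fun n s => sum_lt (fun mu => w mu * kc ^ Q *
            leibniz (fun n s => kc ^ n * euler_gf_deriv (C mu) (Q + n) (kc * s + 0))
                    (fun n s => ka ^ n * euler_gf_deriv (A mu) n (ka * s + 0)) n s) N).
  split; [|split].
  - intros s. apply (is_derive_seq_ext (fun t => sum_lt (fun mu =>
                       w mu * euler_gf (A mu) (ka * s) * euler_gf (C mu) (kc * t + kc * s)) N)).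
    { intros t. apply sum_lt_ext; intros. rewrite <- Rmult_plus_distr_l, (Rplus_comm t). ring. }
    apply is_derive_seq_sum; intros mu.
    apply is_derive_seq_scal, is_derive_seq_euler_gf_affine.
  - apply (is_derive_seq_ext (fun s => sum_lt (fun mu => w mu * kc ^ Q *
             (euler_gf_deriv (C mu) Q (kc * s + 0) * euler_gf (A mu) (ka * s + 0))) N)).
    { intros s. apply sum_lt_ext; intros. rewrite Rmult_0_r, !Rplus_0_l, !Rplus_0_r. ring. }
    apply is_derive_seq_sum; intros mu. apply is_derive_seq_scal, is_derive_seq_mult;
      [apply is_derive_seq_euler_gf_deriv_affine | apply is_derive_seq_euler_gf_affine].
  - apply sum_lt_ext; intros mu _. unfold leibniz.
    rewrite Rmult_assoc, <- sum_lt_scal_l. f_equal. apply sum_lt_ext; intros k _.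
    rewrite !Rmult_0_r, !Rplus_0_r, !euler_gf_deriv_0, pow_add. ring.
Qed.

Lemma has_mixed_derive_gf_diag_r (B C : nat -> R) kb kc :
  has_mixed_derive P Q
    (fun s t => sum_lt (fun mu => w mu * euler_gf (C mu) (kc * (s + t)) * euler_gf (B mu) (kb * t)) N)
    (sum_lt (fun mu => w mu * sum_lt (fun k =>
       binom Q k * (kc ^ (k + P) * euler_fun (k + P) (C mu))
                 * (kb ^ (Q - k) * euler_fun (Q - k) (B mu))) (S Q)) N).
Proof.
  exists (fun s n t => sum_lt (fun mu => w mu *
            leibniz (fun n t => kc ^ n * euler_gf_deriv (C mu) n (kc * t + kc * s))
                    (fun n t => kb ^ n * euler_gf_deriv (B mu) n (kb * t + 0)) n t) N).
  exists (fun n s => sum_lt (fun mu => w mu * sum_lt (fun k =>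
            binom Q k * kc ^ k * (kb ^ (Q - k) * euler_gf_deriv (B mu) (Q - k) (kb * 0 + 0))
            * (kc ^ n * euler_gf_deriv (C mu) (k + n) (kc * s + 0))) (S Q)) N).
  split; [|split].
  - intros s. apply (is_derive_seq_ext (fun t => sum_lt (fun mu =>
             w mu * (euler_gf (C mu) (kc * t + kc * s) * euler_gf (B mu) (kb * t + 0))) N)).
    { intros t. apply sum_lt_ext; intros.
      rewrite Rplus_0_r, <- Rmult_plus_distr_l, (Rplus_comm t). ring. }
    apply is_derive_seq_sum; intros mu.
    apply is_derive_seq_scal, is_derive_seq_mult; apply is_derive_seq_euler_gf_affine.
  - apply (is_derive_seq_ext (fun s => sum_lt (fun mu => w mu * sum_lt (fun k =>
             binom Q k * kc ^ k * (kb ^ (Q - k) * euler_gf_deriv (B mu) (Q - k) (kb * 0 + 0))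
             * euler_gf_deriv (C mu) k (kc * s + 0)) (S Q)) N)).
    { intros s. apply sum_lt_ext; intros mu _. unfold leibniz. f_equal.
      apply sum_lt_ext; intros k _. replace (kc * 0 + kc * s) with (kc * s + 0) by ring. ring. }
    apply is_derive_seq_sum; intros mu. apply is_derive_seq_scal.
    apply is_derive_seq_sum; intros k. apply is_derive_seq_scal.
    apply is_derive_seq_euler_gf_deriv_affine.
  - apply sum_lt_ext; intros mu _. f_equal. apply sum_lt_ext; intros k _.
    rewrite !Rmult_0_r, !Rplus_0_r, !euler_gf_deriv_0, pow_add. ring.
Qed.

End MixedDerivatives.

(** * Floors of linear forms *)

(* The largest integer strictly below [u], i.e. the left limit of [Int_part] at [u]. *)
Definition floor_lt (u : R) : Z := (- Int_part (- u) - 1)%Z.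

Lemma Int_part_bounds u : IZR (Int_part u) <= u < IZR (Int_part u) + 1.
Proof. destruct (base_Int_part u). lra. Qed.

Lemma floor_lt_bounds u : IZR (floor_lt u) < u <= IZR (floor_lt u) + 1.
Proof. unfold floor_lt. destruct (Int_part_bounds (- u)). rewrite minus_IZR, opp_IZR. lra. Qed.

Lemma Int_part_ge n u : IZR n <= u -> (n <= Int_part u)%Z.
Proof.
  intros H. destruct (Int_part_bounds u).
  assert (n < Int_part u + 1)%Z by (apply lt_IZR; rewrite plus_IZR; lra). lia.
Qed.

Lemma Int_part_lt n u : u < IZR n -> (Int_part u < n)%Z.
Proof. intros H. destruct (Int_part_bounds u). apply lt_IZR; lra. Qed.

Lemma Int_part_le u v : u <= v -> (Int_part u <= Int_part v)%Z.
Proof. intros H. apply Int_part_ge. destruct (Int_part_bounds u). lra. Qed.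

Lemma Int_part_IZR k : Int_part (IZR k) = k.
Proof. symmetry; apply Int_part_spec; lra. Qed.

Lemma floor_lt_IZR k : floor_lt (IZR k) = (k - 1)%Z.
Proof. unfold floor_lt. rewrite <- opp_IZR, Int_part_IZR. lia. Qed.

Lemma Int_part_plus_IZR u k : Int_part (u + IZR k) = (Int_part u + k)%Z.
Proof.
  symmetry; apply Int_part_spec. rewrite plus_IZR. destruct (Int_part_bounds u); lra.
Qed.

Lemma floor_lt_plus_IZR u k : floor_lt (u + IZR k) = (floor_lt u + k)%Z.
Proof.
  unfold floor_lt. replace (- (u + IZR k)) with (- u + IZR (- k)) by (rewrite opp_IZR; ring).
  rewrite Int_part_plus_IZR. lia.
Qed.

Lemma Int_part_opp u : Int_part (- u) = (- floor_lt u - 1)%Z.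
Proof. unfold floor_lt. lia. Qed.

Lemma floor_lt_opp u : floor_lt (- u) = (- Int_part u - 1)%Z.
Proof. unfold floor_lt. rewrite Ropp_involutive. reflexivity. Qed.

Lemma floor_lt_cases u :
  (floor_lt u = Int_part u /\ IZR (Int_part u) < u)
  \/ (floor_lt u = Int_part u - 1 /\ u = IZR (Int_part u))%Z.
Proof.
  destruct (floor_lt_bounds u), (Int_part_bounds u).
  assert (A : (floor_lt u <= Int_part u)%Z) by (apply Int_part_ge; lra).
  assert (B : (Int_part u < floor_lt u + 2)%Z) by (apply lt_IZR; rewrite plus_IZR; simpl; lra).
  destruct (Z.eq_dec (floor_lt u) (Int_part u)) as [E|E].
  - left; split; [exact E|]. rewrite <- E; lra.
  - right; split; [lia|]. replace (floor_lt u) with (Int_part u - 1)%Z in * by lia.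
    rewrite minus_IZR in *. lra.
Qed.

(* [sum_Z m n f] is the sum of [f k] over the integers [m < k <= n]. *)
Definition sum_Z (m n : Z) (f : Z -> R) : R :=
  sum_lt (fun j => f (m + 1 + Z.of_nat j)%Z) (Z.to_nat (n - m)).

Lemma sum_Z_empty m f : sum_Z m m f = 0.
Proof. unfold sum_Z. rewrite Z.sub_diag. reflexivity. Qed.

Lemma sum_Z_split m k n f : (m <= k <= n)%Z -> sum_Z m n f = sum_Z m k f + sum_Z k n f.
Proof.
  intros H. unfold sum_Z.
  replace (Z.to_nat (n - m)) with (Z.to_nat (k - m) + Z.to_nat (n - k))%nat by lia.
  induction (Z.to_nat (n - k)) as [|p IH].
  - rewrite Nat.add_0_r; simpl; ring.
  - rewrite Nat.add_succ_r, !sum_lt_S, IH, Rplus_assoc.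
    do 2 f_equal. f_equal. lia.
Qed.

Lemma sum_Z_last n f : sum_Z (n - 1) n f = f n.
Proof.
  unfold sum_Z. replace (n - (n - 1))%Z with 1%Z by lia. simpl.
  rewrite Rplus_0_l. f_equal. lia.
Qed.

Lemma sum_Z_period (P : nat) f m m' : (forall k, f (k + Z.of_nat P)%Z = f k) ->
  sum_Z m (m + Z.of_nat P) f = sum_Z m' (m' + Z.of_nat P) f.
Proof.
  intros Hf.
  assert (step : forall m, sum_Z m (m + Z.of_nat P) f = sum_Z (m + 1) (m + 1 + Z.of_nat P) f).
  { intros k. destruct P as [|P]; [rewrite !Z.add_0_r, !sum_Z_empty; reflexivity|].
    rewrite (sum_Z_split k (k + 1) (k + Z.of_nat (S P))) by lia.
    rewrite (sum_Z_split (k + 1) (k + Z.of_nat (S P)) (k + 1 + Z.of_nat (S P))) by lia.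
    assert (first : sum_Z k (k + 1) f = f (k + 1)%Z)
      by (rewrite <- (sum_Z_last (k + 1)); f_equal; lia).
    assert (last : sum_Z (k + Z.of_nat (S P)) (k + 1 + Z.of_nat (S P)) f = f (k + 1)%Z)
      by (rewrite <- Hf, <- sum_Z_last; f_equal; lia).
    rewrite first, last. ring. }
  assert (shift : forall (n : nat) m,
    sum_Z m (m + Z.of_nat P) f = sum_Z (m + Z.of_nat n) (m + Z.of_nat n + Z.of_nat P) f).
  { induction n as [|n IH]; intros k; [rewrite !Z.add_0_r; reflexivity|].
    rewrite IH, step. f_equal; lia. }
  destruct (Z.le_ge_cases m m') as [H|H].
  - rewrite (shift (Z.to_nat (m' - m)) m). f_equal; lia.
  - rewrite (shift (Z.to_nat (m - m')) m'). f_equal; lia.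
Qed.

Lemma sum_Z_from_neg1 (P : nat) f :
  sum_Z (-1) (-1 + Z.of_nat P) f = sum_lt (fun mu => f (Z.of_nat mu)) P.
Proof.
  unfold sum_Z. replace (-1 + Z.of_nat P - -1)%Z with (Z.of_nat P) by lia.
  rewrite Nat2Z.id. apply sum_lt_ext; intros; f_equal; lia.
Qed.

Lemma sum_Z_to_0 (P : nat) f :
  sum_Z (- Z.of_nat P) (- Z.of_nat P + Z.of_nat P) f = sum_lt (fun mu => f (- Z.of_nat mu)%Z) P.
Proof.
  unfold sum_Z. replace (- Z.of_nat P + Z.of_nat P - - Z.of_nat P)%Z with (Z.of_nat P) by lia.
  rewrite Nat2Z.id, sum_lt_rev. apply sum_lt_ext; intros; f_equal; lia.
Qed.

Definition form_floor d o (t : R) : Z := Int_part (d * t + o).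
Definition form_floor_lt d o (t : R) : Z := floor_lt (d * t + o).
Definition form_root d o (k : Z) : R := (IZR k - o) / d.

Section LinearForm.
Variables (d o : R).
Hypothesis d_pos : 0 < d.

Lemma form_root_spec k : d * form_root d o k + o = IZR k.
Proof. unfold form_root. field. lra. Qed.

Lemma form_floor_le t t' : t <= t' -> (form_floor d o t <= form_floor d o t')%Z.
Proof. intros; apply Int_part_le. apply Rplus_le_compat_r, Rmult_le_compat_l; lra. Qed.

Lemma form_root_le_iff k t : form_root d o k <= t <-> IZR k <= d * t + o.
Proof.
  rewrite <- (form_root_spec k). split; intros H.
  - apply Rplus_le_compat_r, Rmult_le_compat_l; lra.
  - apply (Rmult_le_reg_l d); lra.
Qed.

Lemma form_root_floor_le t : form_root d o (form_floor d o t) <= t.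
Proof. apply form_root_le_iff. apply Int_part_bounds. Qed.

Lemma form_floor_ge k t : form_root d o k <= t -> (k <= form_floor d o t)%Z.
Proof. intros H. apply Int_part_ge, form_root_le_iff, H. Qed.

Lemma lt_form_root t k : (form_floor d o t < k)%Z -> t < form_root d o k.
Proof.
  intros H. destruct (Rlt_or_le t (form_root d o k)) as [Hlt|Hle]; [exact Hlt|].
  apply form_floor_ge in Hle. lia.
Qed.

Lemma form_floor_root k : form_floor d o (form_root d o k) = k.
Proof. unfold form_floor. rewrite form_root_spec. apply Int_part_IZR. Qed.

Lemma form_floor_lt_root k : form_floor_lt d o (form_root d o k) = (k - 1)%Z.
Proof. unfold form_floor_lt. rewrite form_root_spec. apply floor_lt_IZR. Qed.

Lemma form_root_floor_lt t : form_root d o (form_floor_lt d o t) < t.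
Proof.
  destruct (Rlt_or_le (form_root d o (form_floor_lt d o t)) t) as [Hlt|Hle]; [exact Hlt|].
  assert (d * t + o <= IZR (form_floor_lt d o t)).
  { rewrite <- form_root_spec. apply Rplus_le_compat_r, Rmult_le_compat_l; lra. }
  unfold form_floor_lt in *. destruct (floor_lt_bounds (d * t + o)). lra.
Qed.

Lemma form_floor_before m t :
  form_root d o (form_floor_lt d o m) <= t -> t < m -> form_floor d o t = form_floor_lt d o m.
Proof.
  intros H1 H2. apply Z.le_antisymm; [|apply form_floor_ge, H1].
  unfold form_floor_lt. destruct (floor_lt_bounds (d * m + o)).
  apply Z.lt_succ_r, Int_part_lt. rewrite succ_IZR.
  assert (d * t < d * m) by (apply Rmult_lt_compat_l; lra). lra.
Qed.

Lemma form_floor_lt_cases t :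
  form_floor_lt d o t = form_floor d o t
  \/ (form_floor_lt d o t = form_floor d o t - 1 /\ form_root d o (form_floor d o t) = t)%Z.
Proof.
  unfold form_floor_lt, form_floor. destruct (floor_lt_cases (d * t + o)) as [[A _]|[A B]].
  - left; exact A.
  - right; split; [exact A|]. unfold form_root. rewrite <- B. field. lra.
Qed.

Lemma form_floor_lt_le t : (form_floor_lt d o t <= form_floor d o t)%Z.
Proof. destruct (form_floor_lt_cases t) as [A|[A _]]; lia. Qed.

Lemma sum_Z_form_jump m (J : R -> R) :
  (form_floor_lt d o m = form_floor d o m -> J m = 0) ->
  sum_Z (form_floor_lt d o m) (form_floor d o m) (fun k => J (form_root d o k)) = J m.
Proof.
  intros H. destruct (form_floor_lt_cases m) as [A|[A B]].
  - rewrite A, sum_Z_empty. symmetry; auto.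
  - rewrite A, sum_Z_last, B. reflexivity.
Qed.

Definition last_crossing t0 t1 :=
  if (form_floor d o t0 <? form_floor d o t1)%Z then form_root d o (form_floor d o t1) else t0.

Section Interval.
Variables (t0 t1 : R).
Hypothesis t01 : t0 <= t1.

Lemma last_crossing_bounds : t0 <= last_crossing t0 t1 <= t1.
Proof.
  unfold last_crossing. destruct (Z.ltb_spec (form_floor d o t0) (form_floor d o t1)) as [L|L].
  - split; [apply Rlt_le, lt_form_root, L | apply form_root_floor_le].
  - lra.
Qed.

Lemma last_crossing_gt : (form_floor d o t0 < form_floor d o t1)%Z -> t0 < last_crossing t0 t1.
Proof.
  intros L. unfold last_crossing. apply Z.ltb_lt in L. rewrite L.
  apply lt_form_root. apply Z.ltb_lt in L. exact L.
Qed.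

Lemma last_crossing_jumps : last_crossing t0 t1 = t0 \/
  (form_floor_lt d o (last_crossing t0 t1) < form_floor d o (last_crossing t0 t1))%Z.
Proof.
  unfold last_crossing. destruct (form_floor d o t0 <? form_floor d o t1)%Z; [right|left; reflexivity].
  rewrite form_floor_lt_root, form_floor_root. lia.
Qed.

Lemma form_floor_after_last_crossing m :
  last_crossing t0 t1 <= m -> m <= t1 -> form_floor d o m = form_floor d o t1.
Proof.
  intros H1 H2. destruct last_crossing_bounds as [L0 L1].
  apply Z.le_antisymm; [apply form_floor_le, H2|].
  unfold last_crossing in H1. destruct (Z.ltb_spec (form_floor d o t0) (form_floor d o t1)).
  - apply form_floor_ge, H1.
  - assert (form_floor d o t0 <= form_floor d o m)%Z by (apply form_floor_le; lra). lia.
Qed.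

End Interval.
End LinearForm.

(** * Jumps of a step function *)

Section Sweep.
Variables (d1 o1 d2 o2 d3 o3 : R) (G : Z -> Z -> Z -> R).
Hypotheses (d1_pos : 0 < d1) (d2_pos : 0 < d2) (d3_pos : 0 < d3).

Local Notation N1 := (form_floor d1 o1).
Local Notation N2 := (form_floor d2 o2).
Local Notation N3 := (form_floor d3 o3).
Local Notation M1 := (form_floor_lt d1 o1).
Local Notation M2 := (form_floor_lt d2 o2).
Local Notation M3 := (form_floor_lt d3 o3).

Definition step_value t := G (N1 t) (N2 t) (N3 t).

(* The jump [step_value t - G (M1 t) (M2 t) (M3 t)] of the step function at [t], split into three
   telescoping parts; the [i]-th one vanishes unless the [i]-th form is an integer at [t]. This is
   what makes simultaneous crossings harmless. *)
Definition jump1 t := G (N1 t) (M2 t) (M3 t) - G (M1 t) (M2 t) (M3 t).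
Definition jump2 t := G (N1 t) (N2 t) (M3 t) - G (N1 t) (M2 t) (M3 t).
Definition jump3 t := G (N1 t) (N2 t) (N3 t) - G (N1 t) (N2 t) (M3 t).

Definition jump_sum t0 t1 :=
  sum_Z (N1 t0) (N1 t1) (fun k => jump1 (form_root d1 o1 k))
  + sum_Z (N2 t0) (N2 t1) (fun k => jump2 (form_root d2 o2 k))
  + sum_Z (N3 t0) (N3 t1) (fun k => jump3 (form_root d3 o3 k)).

Definition crossings t0 t1 : nat :=
  (Z.to_nat (N1 t1 - N1 t0) + Z.to_nat (N2 t1 - N2 t0) + Z.to_nat (N3 t1 - N3 t0))%nat.

Lemma last_jump t0 t1 : t0 <= t1 -> (N1 t0 < N1 t1 \/ N2 t0 < N2 t1 \/ N3 t0 < N3 t1)%Z ->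
  exists m, t0 < m <= t1 /\ N1 m = N1 t1 /\ N2 m = N2 t1 /\ N3 m = N3 t1
            /\ (M1 m < N1 m \/ M2 m < N2 m \/ M3 m < N3 m)%Z.
Proof.
  intros t01 increase.
  destruct (last_crossing_bounds d1 o1 d1_pos t0 t1 t01) as [l1a l1b].
  destruct (last_crossing_bounds d2 o2 d2_pos t0 t1 t01) as [l2a l2b].
  destruct (last_crossing_bounds d3 o3 d3_pos t0 t1 t01) as [l3a l3b].
  set (l1 := last_crossing d1 o1 t0 t1) in *; set (l2 := last_crossing d2 o2 t0 t1) in *;
    set (l3 := last_crossing d3 o3 t0 t1) in *.
  set (m := Rmax l1 (Rmax l2 l3)).
  assert (ml1 : l1 <= m) by apply Rmax_l.
  assert (ml2 : l2 <= m) by (eapply Rle_trans; [apply Rmax_l | apply Rmax_r]).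
  assert (ml3 : l3 <= m) by (eapply Rle_trans; [apply Rmax_r | apply Rmax_r]).
  assert (mt1 : m <= t1) by (unfold m; repeat apply Rmax_lub; lra).
  assert (t0m : t0 < m).
  { destruct increase as [H|[H|H]];
      [apply (last_crossing_gt d1 o1 d1_pos t0 t1) in H
      |apply (last_crossing_gt d2 o2 d2_pos t0 t1) in H
      |apply (last_crossing_gt d3 o3 d3_pos t0 t1) in H]; fold l1 l2 l3 in H; lra. }
  exists m. split; [lra|]. repeat split;
    try (apply form_floor_after_last_crossing with t0; assumption).
  assert (which : m = l1 \/ m = l2 \/ m = l3)
    by (unfold m; apply Rmax_case; [left | apply Rmax_case; right; [left | right]]; reflexivity).
  destruct which as [E|[E|E]]; rewrite E;
    [destruct (last_crossing_jumps d1 o1 d1_pos t0 t1) as [J|J]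
    |destruct (last_crossing_jumps d2 o2 d2_pos t0 t1) as [J|J]
    |destruct (last_crossing_jumps d3 o3 d3_pos t0 t1) as [J|J]]; fold l1 l2 l3 in J; auto; lra.
Qed.

Lemma just_before t0 m : t0 < m ->
  exists t', t0 <= t' < m /\ N1 t' = M1 m /\ N2 t' = M2 m /\ N3 t' = M3 m.
Proof.
  intros t0m.
  set (r1 := form_root d1 o1 (M1 m)); set (r2 := form_root d2 o2 (M2 m));
    set (r3 := form_root d3 o3 (M3 m)).
  exists (Rmax t0 (Rmax r1 (Rmax r2 r3))).
  assert (r1 <= Rmax t0 (Rmax r1 (Rmax r2 r3)))
    by (eapply Rle_trans; [apply Rmax_l | apply Rmax_r]).
  assert (r2 <= Rmax t0 (Rmax r1 (Rmax r2 r3)))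
    by (eapply Rle_trans; [|apply Rmax_r]; eapply Rle_trans; [apply Rmax_l | apply Rmax_r]).
  assert (r3 <= Rmax t0 (Rmax r1 (Rmax r2 r3)))
    by (eapply Rle_trans; [|apply Rmax_r]; eapply Rle_trans; [apply Rmax_r | apply Rmax_r]).
  assert (Rmax t0 (Rmax r1 (Rmax r2 r3)) < m)
    by (repeat apply Rmax_lub_lt; auto; apply form_root_floor_lt; auto).
  split; [split; [apply Rmax_l | assumption]|].
  repeat split; apply form_floor_before; auto.
Qed.

Lemma jump_sum_last t0 t' m t1 :
  (N1 t0 <= N1 t')%Z -> (N2 t0 <= N2 t')%Z -> (N3 t0 <= N3 t')%Z ->
  N1 t' = M1 m -> N2 t' = M2 m -> N3 t' = M3 m ->
  N1 m = N1 t1 -> N2 m = N2 t1 -> N3 m = N3 t1 ->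
  jump_sum t0 t1 = jump_sum t0 t' + (step_value m - G (M1 m) (M2 m) (M3 m)).
Proof.
  intros le1 le2 le3 b1 b2 b3 e1 e2 e3. unfold jump_sum.
  rewrite (sum_Z_split (N1 t0) (N1 t') (N1 t1)), (sum_Z_split (N2 t0) (N2 t') (N2 t1)),
    (sum_Z_split (N3 t0) (N3 t') (N3 t1))
    by (pose proof (form_floor_lt_le d1 o1 d1_pos m); pose proof (form_floor_lt_le d2 o2 d2_pos m);
        pose proof (form_floor_lt_le d3 o3 d3_pos m); lia).
  rewrite b1, b2, b3, <- e1, <- e2, <- e3.
  rewrite (sum_Z_form_jump d1 o1 d1_pos m jump1) by (unfold jump1; intros ->; ring).
  rewrite (sum_Z_form_jump d2 o2 d2_pos m jump2) by (unfold jump2; intros ->; ring).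
  rewrite (sum_Z_form_jump d3 o3 d3_pos m jump3) by (unfold jump3; intros ->; ring).
  unfold step_value, jump1, jump2, jump3. ring.
Qed.

Lemma sweep t0 t1 : t0 <= t1 -> step_value t1 - step_value t0 = jump_sum t0 t1.
Proof.
  remember (crossings t0 t1) as K eqn:HK. revert t1 HK.
  induction K as [K IH] using lt_wf_ind. intros t1 HK t01.
  pose proof (form_floor_le d1 o1 d1_pos t0 t1 t01);
    pose proof (form_floor_le d2 o2 d2_pos t0 t1 t01);
    pose proof (form_floor_le d3 o3 d3_pos t0 t1 t01).
  assert (cases : (N1 t0 = N1 t1 /\ N2 t0 = N2 t1 /\ N3 t0 = N3 t1)
                  \/ (N1 t0 < N1 t1 \/ N2 t0 < N2 t1 \/ N3 t0 < N3 t1)%Z) by lia.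
  destruct cases as [(E1 & E2 & E3) | increase].
  { unfold step_value, jump_sum. rewrite <- E1, <- E2, <- E3, !sum_Z_empty. ring. }
  destruct (last_jump t0 t1 t01 increase) as (m & [t0m mt1] & e1 & e2 & e3 & strict).
  destruct (just_before t0 m t0m) as (t' & [t0t' t'm] & b1 & b2 & b3).
  pose proof (form_floor_le d1 o1 d1_pos t0 t' t0t');
    pose proof (form_floor_le d2 o2 d2_pos t0 t' t0t');
    pose proof (form_floor_le d3 o3 d3_pos t0 t' t0t').
  pose proof (form_floor_lt_le d1 o1 d1_pos m); pose proof (form_floor_lt_le d2 o2 d2_pos m);
    pose proof (form_floor_lt_le d3 o3 d3_pos m).
  assert (fewer : (crossings t0 t' < K)%nat) by (unfold crossings in *; lia).
  rewrite (jump_sum_last t0 t' m t1), <- (IH _ fewer t' eq_refl t0t') by assumption.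
  unfold step_value. rewrite <- e1, <- e2, <- e3, <- b1, <- b2, <- b3. ring.
Qed.

End Sweep.

Lemma form_floor_add1 (n : nat) o t :
  form_floor (INR n) o (t + 1) = (form_floor (INR n) o t + Z.of_nat n)%Z.
Proof.
  unfold form_floor. rewrite <- Int_part_plus_IZR, <- INR_IZR_INZ. f_equal. ring.
Qed.

Lemma form_floor_lt_add1 (n : nat) o t :
  form_floor_lt (INR n) o (t + 1) = (form_floor_lt (INR n) o t + Z.of_nat n)%Z.
Proof.
  unfold form_floor_lt. rewrite <- floor_lt_plus_IZR, <- INR_IZR_INZ. f_equal. ring.
Qed.

Lemma form_root_add (n : nat) o k : (0 < n)%nat ->
  form_root (INR n) o (k + Z.of_nat n) = form_root (INR n) o k + 1.
Proof.
  intros H. unfold form_root. rewrite plus_IZR, <- INR_IZR_INZ. field. apply not_0_INR; lia.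
Qed.

Section PeriodicSweep.
Variables (na nb nc : nat) (o1 o2 o3 : R) (G : Z -> Z -> Z -> R).
Hypotheses (na_pos : (0 < na)%nat) (nb_pos : (0 < nb)%nat) (nc_pos : (0 < nc)%nat).
Hypothesis G_periodic : forall n1 n2 n3,
  G (n1 + Z.of_nat na)%Z (n2 + Z.of_nat nb)%Z (n3 + Z.of_nat nc)%Z = G n1 n2 n3.

Local Notation J1 := (jump1 (INR na) o1 (INR nb) o2 (INR nc) o3 G).
Local Notation J2 := (jump2 (INR na) o1 (INR nb) o2 (INR nc) o3 G).
Local Notation J3 := (jump3 (INR na) o1 (INR nb) o2 (INR nc) o3 G).

Lemma jump_add1 t : J1 (t + 1) = J1 t /\ J2 (t + 1) = J2 t /\ J3 (t + 1) = J3 t.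
Proof.
  unfold jump1, jump2, jump3.
  rewrite !form_floor_add1, !form_floor_lt_add1, !G_periodic. tauto.
Qed.

Lemma jumps_over_period :
  sum_lt (fun mu => J1 (form_root (INR na) o1 (- Z.of_nat mu))) na
  + sum_lt (fun mu => J2 (form_root (INR nb) o2 (- Z.of_nat mu))) nb
  + sum_lt (fun mu => J3 (form_root (INR nc) o3 (Z.of_nat mu))) nc = 0.
Proof.
  assert (ra : 0 < INR na) by (apply lt_0_INR; lia).
  assert (rb : 0 < INR nb) by (apply lt_0_INR; lia).
  assert (rc : 0 < INR nc) by (apply lt_0_INR; lia).
  pose proof (sweep _ o1 _ o2 _ o3 G ra rb rc 0 (0 + 1) ltac:(lra)) as S.
  unfold step_value, jump_sum in S.
  rewrite !form_floor_add1, G_periodic, Rminus_diag in S.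
  rewrite (sum_Z_period na _ _ (- Z.of_nat na)),
          (sum_Z_period nb _ _ (- Z.of_nat nb)), (sum_Z_period nc _ _ (-1)) in S
    by (intros k; rewrite form_root_add by assumption; apply jump_add1).
  rewrite !sum_Z_to_0, sum_Z_from_neg1 in S. lra.
Qed.

End PeriodicSweep.

(** * The generating-function identity *)

Lemma sgnZ_add m n : sgnZ (m + n) = sgnZ m * sgnZ n.
Proof. unfold sgnZ. rewrite Z.even_add. destruct (Z.even m), (Z.even n); simpl; ring. Qed.

Lemma sgnZ_opp n : sgnZ (- n) = sgnZ n.
Proof. unfold sgnZ. rewrite Z.even_opp. reflexivity. Qed.

Lemma sgnZ_pred n : sgnZ (n - 1) = - sgnZ n.
Proof.
  replace (n - 1)%Z with (n + -1)%Z by lia. rewrite sgnZ_add. change (sgnZ (-1)) with (-1). ring.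
Qed.

Lemma sgnZ_of_nat n : sgnZ (Z.of_nat n) = (-1) ^ n.
Proof.
  induction n as [|n IH]; [reflexivity|].
  rewrite Nat2Z.inj_succ, <- Z.add_1_r, sgnZ_add, IH. change (sgnZ 1) with (-1). simpl; ring.
Qed.

Definition sign_exp (s : R) (n : Z) := sgnZ n * exp (- IZR n * s).

Lemma sign_exp_add s m n : sign_exp s (m + n) = sign_exp s m * sign_exp s n.
Proof.
  unfold sign_exp. rewrite sgnZ_add, plus_IZR, Ropp_plus_distr, Rmult_plus_distr_r, exp_plus. ring.
Qed.

Lemma sign_exp_opp_nat s mu : sign_exp s (- Z.of_nat mu) = (-1) ^ mu * exp (INR mu * s).
Proof.
  unfold sign_exp. rewrite sgnZ_opp, sgnZ_of_nat, opp_IZR, Ropp_involutive, INR_IZR_INZ.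
  reflexivity.
Qed.

Lemma sign_exp_opp_nat_pred s mu :
  sign_exp s (- Z.of_nat mu - 1) = - (-1) ^ mu * exp (INR mu * s) * exp s.
Proof.
  replace (- Z.of_nat mu - 1)%Z with (- Z.of_nat mu + -1)%Z by lia.
  rewrite sign_exp_add, sign_exp_opp_nat. unfold sign_exp. change (sgnZ (-1)) with (-1).
  replace (- IZR (-1) * s) with s by (simpl; ring). ring.
Qed.

Lemma euler_gf_mul u s : euler_gf u s * (exp s + 1) = 2 * exp (u * s) * sign_exp s (Int_part u).
Proof.
  unfold euler_gf, inv_exp1, frac_part, sign_exp.
  replace ((u - IZR (Int_part u)) * s) with (u * s + - IZR (Int_part u) * s) by ring.
  rewrite exp_plus. field. generalize (exp_pos s); lra.
Qed.

Lemma euler_gf_opp_mul u s :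
  euler_gf (- u) (- s) * (exp s + 1) = - 2 * exp (u * s) * sign_exp s (floor_lt u).
Proof.
  assert (E : exp (- s) * (exp s + 1) = exp (- s) + 1).
  { rewrite Rmult_plus_distr_l, <- exp_plus, Rplus_opp_l, exp_0. ring. }
  apply (Rmult_eq_reg_l (exp (- s))); [|apply Rgt_not_eq, exp_pos].
  rewrite <- Rmult_assoc, (Rmult_comm (exp (- s))), Rmult_assoc, E, euler_gf_mul.
  rewrite Int_part_opp. unfold sign_exp.
  rewrite sgnZ_pred, sgnZ_opp, minus_IZR, opp_IZR.
  replace (- (- IZR (floor_lt u) - 1) * - s) with (- s + - IZR (floor_lt u) * s) by ring.
  rewrite exp_plus. replace (- u * - s) with (u * s) by ring. ring.
Qed.

Lemma exp_eq_div u1 u2 v : exp u1 * exp u2 = v -> exp u1 = v / exp u2.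
Proof. intros <-. field. apply Rgt_not_eq, exp_pos. Qed.

Section GeneratingIdentity.
Variables (na nb nc : nat) (x y z al be ga : R).
Hypotheses (na_pos : (0 < na)%nat) (nb_pos : (0 < nb)%nat) (nc_pos : (0 < nc)%nat).
Hypothesis rel : INR na * al + INR nb * be = INR nc * ga.

Let ra : 0 < INR na. Proof. apply lt_0_INR; lia. Qed.
Let rb : 0 < INR nb. Proof. apply lt_0_INR; lia. Qed.
Let rc : 0 < INR nc. Proof. apply lt_0_INR; lia. Qed.

(* By [euler_gf_mul], each product of generating functions below is [exp] of a linear expression
   times this weight evaluated at the floors of the three forms [a t + x], [b t + y], [c t - z]. *)
Definition weight (n1 n2 n3 : Z) := sign_exp al n1 * sign_exp be n2 * sign_exp ga (- n3 - 1).

Local Notation E := (x * al + y * be + z * ga).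
Local Notation K := ((exp al + 1) * (exp be + 1) * (exp ga + 1)).
Local Notation jump i := (i (INR na) x (INR nb) y (INR nc) (- z) weight).

Lemma jump3_at_root mu :
  jump jump3 (form_root (INR nc) (- z) (Z.of_nat mu)) * (4 * exp E)
  = - ((-1) ^ mu * euler_gf (INR na * ((INR mu + z) / INR nc) + x) al
                 * euler_gf (INR nb * ((INR mu + z) / INR nc) + y) be) * K.
Proof.
  set (w := (INR mu + z) / INR nc).
  assert (root : form_root (INR nc) (- z) (Z.of_nat mu) = w)
    by (unfold form_root, w; rewrite <- INR_IZR_INZ; field; lra).
  set (U1 := INR na * w + x); set (U2 := INR nb * w + y).
  assert (expo : exp (U1 * al) = exp (INR mu * ga) * exp E / exp (U2 * be)).
  { apply exp_eq_div. rewrite <- !exp_plus. f_equal.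
    transitivity (w * (INR na * al + INR nb * be) + x * al + y * be); [unfold U1, U2; ring|].
    rewrite rel. unfold w. field. lra. }
  unfold jump3. rewrite form_floor_root, form_floor_lt_root, root by exact rc.
  unfold form_floor, weight. fold U1 U2.
  replace (- (Z.of_nat mu - 1) - 1)%Z with (- Z.of_nat mu)%Z by lia.
  rewrite sign_exp_opp_nat, sign_exp_opp_nat_pred.
  replace (- ((-1) ^ mu * euler_gf U1 al * euler_gf U2 be) * K) with
    (- (-1) ^ mu * (euler_gf U1 al * (exp al + 1)) * (euler_gf U2 be * (exp be + 1)) * (exp ga + 1))
    by ring.
  rewrite !euler_gf_mul, expo. field. apply Rgt_not_eq, exp_pos.
Qed.

Lemma jump2_at_root mu :
  jump jump2 (form_root (INR nb) y (- Z.of_nat mu)) * (4 * exp E)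
  = ((-1) ^ mu * euler_gf (INR nc * ((INR mu + y) / INR nb) + z) ga
               * euler_gf (- INR na * ((INR mu + y) / INR nb) + x) al) * K.
Proof.
  set (v := (INR mu + y) / INR nb).
  assert (root : form_root (INR nb) y (- Z.of_nat mu) = - v)
    by (unfold form_root, v; rewrite opp_IZR, <- INR_IZR_INZ; field; lra).
  set (U1 := - INR na * v + x); set (U3 := INR nc * v + z).
  assert (expo : exp (U3 * ga) = exp (INR mu * be) * exp E / exp (U1 * al)).
  { apply exp_eq_div. rewrite <- !exp_plus. f_equal.
    transitivity (v * (INR nc * ga - INR na * al) + z * ga + x * al); [unfold U1, U3; ring|].
    rewrite <- rel. unfold v. field. lra. }
  unfold jump2. rewrite form_floor_root, form_floor_lt_root, root by exact rb.
  unfold form_floor, form_floor_lt, weight.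
  replace (INR na * - v + x) with U1 by (unfold U1; ring).
  replace (INR nc * - v + - z) with (- U3) by (unfold U3; ring).
  rewrite floor_lt_opp.
  replace (- (- Int_part U3 - 1) - 1)%Z with (Int_part U3) by lia.
  rewrite sign_exp_opp_nat, sign_exp_opp_nat_pred.
  replace (((-1) ^ mu * euler_gf U3 ga * euler_gf U1 al) * K) with
    ((-1) ^ mu * (euler_gf U3 ga * (exp ga + 1)) * (euler_gf U1 al * (exp al + 1)) * (exp be + 1))
    by ring.
  rewrite !euler_gf_mul, expo. field. apply Rgt_not_eq, exp_pos.
Qed.

Lemma jump1_at_root mu :
  jump jump1 (form_root (INR na) x (- Z.of_nat mu)) * (4 * exp E)
  = - ((-1) ^ mu * euler_gf (INR nc * ((INR mu + x) / INR na) + z) ga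
                 * euler_gf (INR nb * ((INR mu + x) / INR na) + - y) (- be)) * K.
Proof.
  set (w := (INR mu + x) / INR na).
  assert (root : form_root (INR na) x (- Z.of_nat mu) = - w)
    by (unfold form_root, w; rewrite opp_IZR, <- INR_IZR_INZ; field; lra).
  set (L2 := - INR nb * w + y); set (U3 := INR nc * w + z).
  assert (expo : exp (U3 * ga) = exp (INR mu * al) * exp E / exp (L2 * be)).
  { apply exp_eq_div. rewrite <- !exp_plus. f_equal.
    transitivity (w * (INR nc * ga - INR nb * be) + z * ga + y * be); [unfold L2, U3; ring|].
    rewrite <- rel. unfold w. field. lra. }
  unfold jump1. rewrite form_floor_root, form_floor_lt_root, root by exact ra.
  unfold form_floor_lt, weight.
  replace (INR nb * - w + y) with L2 by (unfold L2; ring).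
  replace (INR nc * - w + - z) with (- U3) by (unfold U3; ring).
  rewrite floor_lt_opp.
  replace (- (- Int_part U3 - 1) - 1)%Z with (Int_part U3) by lia.
  rewrite sign_exp_opp_nat, sign_exp_opp_nat_pred.
  replace (INR nb * w + - y) with (- L2) by (unfold L2; ring).
  replace (- ((-1) ^ mu * euler_gf U3 ga * euler_gf (- L2) (- be)) * K) with
    (- (-1) ^ mu * (euler_gf U3 ga * (exp ga + 1)) * (euler_gf (- L2) (- be) * (exp be + 1))
     * (exp al + 1)) by ring.
  rewrite euler_gf_mul, euler_gf_opp_mul, expo. field. apply Rgt_not_eq, exp_pos.
Qed.

Lemma weight_periodic (even : Nat.even (na + nb + nc) = true) n1 n2 n3 :
  weight (n1 + Z.of_nat na) (n2 + Z.of_nat nb) (n3 + Z.of_nat nc) = weight n1 n2 n3.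
Proof.
  assert (period :
    sign_exp al (Z.of_nat na) * sign_exp be (Z.of_nat nb) * sign_exp ga (- Z.of_nat nc) = 1).
  { rewrite sign_exp_opp_nat. unfold sign_exp. rewrite !sgnZ_of_nat, <- !INR_IZR_INZ.
    transitivity ((-1) ^ (na + nb + nc) * exp (- INR na * al + - INR nb * be + INR nc * ga));
      [rewrite !pow_add, !exp_plus; ring|].
    replace (- INR na * al + - INR nb * be + INR nc * ga) with 0 by lra.
    apply Nat.even_spec in even. destruct even as [k ->].
    rewrite exp_0, pow_mult. replace ((-1) ^ 2) with 1 by ring. rewrite pow1. ring. }
  unfold weight. replace (- (n3 + Z.of_nat nc) - 1)%Z with ((- n3 - 1) + - Z.of_nat nc)%Z by lia.
  rewrite !sign_exp_add.
  transitivity (weight n1 n2 n3 * (sign_exp al (Z.of_nat na) * sign_exp be (Z.of_nat nb)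
                                   * sign_exp ga (- Z.of_nat nc))); [unfold weight; ring|].
  rewrite period, Rmult_1_r. reflexivity.
Qed.

Lemma euler_gf_reciprocity : Nat.even (na + nb + nc) = true ->
  sum_lt (fun mu => (-1) ^ mu * euler_gf (INR na * ((INR mu + z) / INR nc) + x) al
                              * euler_gf (INR nb * ((INR mu + z) / INR nc) + y) be) nc
  = sum_lt (fun mu => (-1) ^ mu * euler_gf (INR nc * ((INR mu + y) / INR nb) + z) ga
                                * euler_gf (- INR na * ((INR mu + y) / INR nb) + x) al) nb
    - sum_lt (fun mu => (-1) ^ mu * euler_gf (INR nc * ((INR mu + x) / INR na) + z) ga
                                  * euler_gf (INR nb * ((INR mu + x) / INR na) + - y) (- be)) na.
Proof.
  intros even.
  pose proof (jumps_over_period na nb nc x y (- z) weight na_pos nb_pos nc_pos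
                (weight_periodic even)) as S.
  apply (f_equal (fun v => v * (4 * exp E))) in S.
  rewrite Rmult_0_l, !Rmult_plus_distr_r, <- !sum_lt_scal_r in S.
  rewrite (sum_lt_ext _ _ na (fun mu _ => jump1_at_root mu)),
          (sum_lt_ext _ _ nb (fun mu _ => jump2_at_root mu)),
          (sum_lt_ext _ _ nc (fun mu _ => jump3_at_root mu)), !sum_lt_scal_r, !sum_lt_opp in S.
  assert (K_pos : 0 < K).
  { pose proof (exp_pos al); pose proof (exp_pos be); pose proof (exp_pos ga).
    repeat apply Rmult_lt_0_compat; lra. }
  apply (Rmult_eq_reg_r K); [lra | apply Rgt_not_eq, K_pos].
Qed.

End GeneratingIdentity.

(** * Differentiating the identity *)

Lemma S_pq_sum_lt p q a b c x y z : (0 < c)%Z ->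
  S_pq p q a b c x y z
  = sum_lt (fun mu => (-1) ^ mu * euler_fun (p - 1) (IZR a * ((INR mu + z) / IZR c) + x)
                                * euler_fun (q - 1) (IZR b * ((INR mu + z) / IZR c) + y)) (Z.to_nat c).
Proof. intros hc. unfold S_pq. rewrite sum_f_R0_sum_lt. f_equal. lia. Qed.

Lemma sum_lt_S_pq (M : nat) (coef : nat -> R) (p q : nat -> nat) a b c x y z : (0 < c)%Z ->
  sum_lt (fun mu => (-1) ^ mu * sum_lt (fun k =>
      coef k * euler_fun (p k) (IZR a * ((INR mu + z) / IZR c) + x)
             * euler_fun (q k) (IZR b * ((INR mu + z) / IZR c) + y)) M) (Z.to_nat c)
  = sum_lt (fun k => coef k * S_pq (S (p k)) (S (q k)) a b c x y z) M.
Proof.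
  intros hc.
  rewrite (sum_lt_ext _ (fun mu => sum_lt (fun k => (-1) ^ mu * (coef k
      * euler_fun (p k) (IZR a * ((INR mu + z) / IZR c) + x)
      * euler_fun (q k) (IZR b * ((INR mu + z) / IZR c) + y))) M))
    by (intros; symmetry; apply sum_lt_scal_l).
  rewrite sum_lt_swap. apply sum_lt_ext; intros k _.
  rewrite S_pq_sum_lt, <- sum_lt_scal_l by exact hc. rewrite !Nat.sub_succ, !Nat.sub_0_r.
  apply sum_lt_ext; intros; ring.
Qed.

Lemma euler_reciprocity_derivative (a b c : Z) (P Q : nat) x y z :
  (0 < a)%Z -> (0 < b)%Z -> (0 < c)%Z -> Z.even (a + b + c) = true ->
  (/ IZR a) ^ P * (/ IZR b) ^ Q * S_pq (S P) (S Q) a b c x y z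
  = sum_lt (fun k => binom P k * ((/ IZR c) ^ (Q + k) * (/ IZR a) ^ (P - k))
                     * S_pq (S (Q + k)) (S (P - k)) c (- a) b z x y) (S P)
  - sum_lt (fun k => binom Q k * ((/ IZR c) ^ (k + P) * (- / IZR b) ^ (Q - k))
                     * S_pq (S (k + P)) (S (Q - k)) c b a z (- y) x) (S Q).
Proof.
  intros ha hb hc even.
  assert (to_nat : forall n : Z, (0 <= n)%Z -> IZR n = INR (Z.to_nat n))
    by (intros n hn; rewrite INR_IZR_INZ, Z2Nat.id by exact hn; reflexivity).
  assert (ra : IZR a <> 0) by (apply not_0_IZR; lia).
  assert (rb : IZR b <> 0) by (apply not_0_IZR; lia).
  assert (rc : IZR c <> 0) by (apply not_0_IZR; lia).
  set (w := fun mu : nat => (-1) ^ mu).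
  pose proof (has_mixed_derive_gf_prod (Z.to_nat c) w P Q
    (fun mu => IZR a * ((INR mu + z) / IZR c) + x) (fun mu => IZR b * ((INR mu + z) / IZR c) + y)
    (/ IZR a) (/ IZR b)) as lhs.
  pose proof (has_mixed_derive_minus _ _ _ _ _ _
    (has_mixed_derive_gf_diag_l (Z.to_nat b) w P Q
       (fun mu => IZR (- a) * ((INR mu + y) / IZR b) + x) (fun mu => IZR c * ((INR mu + y) / IZR b) + z)
       (/ IZR a) (/ IZR c))
    (has_mixed_derive_gf_diag_r (Z.to_nat a) w P Q
       (fun mu => IZR b * ((INR mu + x) / IZR a) + - y) (fun mu => IZR c * ((INR mu + x) / IZR a) + z)
       (- / IZR b) (/ IZR c))) as rhs.
  (* Both sides are d^P/ds^P d^Q/dt^Q at (0, 0) of the two sides of [euler_gf_reciprocity] taken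
     at [al = s/a], [be = t/b], [ga = (s + t)/c]. *)
  refine (eq_trans _ (eq_trans (has_mixed_derive_unique _ _ _ _ _ _ lhs rhs _) _)).
  - rewrite S_pq_sum_lt, <- sum_lt_scal_l by exact hc. apply sum_lt_ext; intros mu _.
    rewrite !Nat.sub_succ, !Nat.sub_0_r. unfold w. ring.
  - intros s t. rewrite opp_IZR, (to_nat a), (to_nat b), (to_nat c) by lia.
    replace (- / INR (Z.to_nat b) * t) with (- (/ INR (Z.to_nat b) * t)) by ring.
    apply euler_gf_reciprocity; try lia.
    + rewrite <- !to_nat by lia. field. repeat split; assumption.
    + apply Nat.even_spec. apply Z.even_spec in even. destruct even as [k Hk].
      exists (Z.to_nat k). lia.
  - f_equal; rewrite <- sum_lt_S_pq by assumption; apply sum_lt_ext; intros mu _;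
      unfold w; f_equal; apply sum_lt_ext; intros; ring.
Qed.

Lemma powerRZ_neg_of_nat x (e : Z) n : x <> 0 -> e = (- Z.of_nat n)%Z -> powerRZ x e = (/ x) ^ n.
Proof. intros Hx ->. rewrite powerRZ_neg', <- pow_powerRZ, pow_inv. reflexivity. Qed.

Theorem theorem2 (a b c : Z)
  (ha : (0 < a)%Z) (hb : (0 < b)%Z) (hc : (0 < c)%Z)
  (hab : Z.gcd a b = 1%Z) (hbc : Z.gcd b c = 1%Z) (hac : Z.gcd a c = 1%Z)
  (heven : Z.even (a + b + c) = true)
  (p q : nat) (hp : (1 <= p)%nat) (hq : (1 <= q)%nat) (x y z : R) :
  powerRZ (IZR a) (1 - Z.of_nat p) * powerRZ (IZR b) (1 - Z.of_nat q)
    * S_pq p q a b c x y z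
  = sum_f 1 p (fun j =>
        Binomial.C (p - 1) (j - 1)
        * powerRZ (IZR a) (1 - Z.of_nat j)
        * powerRZ (IZR c) (1 + Z.of_nat j - Z.of_nat p - Z.of_nat q)
        * S_pq (p + q - j) j c (- a) b z x y)
    + sum_f 1 q (fun h =>
        Binomial.C (q - 1) (h - 1) * (-1) ^ h
        * powerRZ (IZR b) (1 - Z.of_nat h)
        * powerRZ (IZR c) (1 + Z.of_nat h - Z.of_nat p - Z.of_nat q)
        * S_pq (p + q - h) h c b a z (- y) x).
Proof.
  assert (ra : IZR a <> 0) by (apply not_0_IZR; lia).
  assert (rb : IZR b <> 0) by (apply not_0_IZR; lia).
  assert (rc : IZR c <> 0) by (apply not_0_IZR; lia).
  destruct p as [|P]; [lia|]. destruct q as [|Q]; [lia|].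
  rewrite (powerRZ_neg_of_nat (IZR a) _ P), (powerRZ_neg_of_nat (IZR b) _ Q) by (assumption || lia).
  rewrite euler_reciprocity_derivative, !sum_f_1_rev by assumption.
  unfold Rminus. rewrite <- sum_lt_opp. f_equal; apply sum_lt_ext; intros k Hk;
    rewrite binom_C, Binomial.pascal_step1, !Nat.sub_succ, !Nat.sub_0_r by lia.
  - rewrite (powerRZ_neg_of_nat (IZR a) _ (P - k)), (powerRZ_neg_of_nat (IZR c) _ (Q + k))
      by (assumption || lia).
    replace (S P + S Q - S (P - k))%nat with (S (Q + k)) by lia. ring.
  - rewrite (powerRZ_neg_of_nat (IZR b) _ (Q - k)), (powerRZ_neg_of_nat (IZR c) _ (k + P))
      by (assumption || lia).
    replace (S P + S Q - S (Q - k))%nat with (S (k + P)) by lia.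
    replace (- / IZR b) with (-1 * / IZR b) by ring. rewrite Rpow_mult_distr. simpl. ring.
Qed.
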